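(* Suppose the weights satisfy the discrete Pearson equations $\theta(k+1)w^{(a)}(k+1)=\sigma^{(a)}(k)w^{(a)}(k)$, $k\in\mathbb N_0$, $a\in\{1,2\}$, with $\theta,\sigma^{(1)},\sigma^{(2)}$ polynomials and $\theta(0)=0$. Then \[ \Pi^{-1}\theta(T)=\sigma^{(1)}\big({T^{(1)}}^\top\big){\Pi^{(1)}}^\top+\sigma^{(2)}\big({T^{(2)}}^\top\big){\Pi^{(2)}}^\top. \]
   Context: Let $w^{(1)},w^{(2)}:\mathbb N_0\to\mathbb C$ be weights, $X(x)=(1,x,x^2,\dots)^\top$, $X^{(1)}(x)=(1,0,x,0,\dots)^\top$, $X^{(2)}(x)=(0,1,0,x,\dots)^\top$, and $\mathscr M=\sum_k X(k)(w^{(1)}(k)X^{(1)}(k)+w^{(2)}(k)X^{(2)}(k))^\top$ the moment matrix (series absolutely convergent). Assume all leading principal minors of $\mathscr M$ are nonzero, so $\mathscr M=S^{-1}H\tilde S^{-\top}$ with $S,\tilde S$ lower unitriangular and $H$ diagonal. $\Lambda$ is the matrix with ones on the first superdiagonal, $I^{(1)}=\operatorname{diag}(1,0,1,0,\dots)$, $I^{(2)}=\operatorname{diag}(0,1,0,1,\dots)$, $\Lambda^{(a)}=\Lambda^2I^{(a)}$. $T=S\Lambda S^{-1}$ and $T^{(a)}=H^{-1}\tilde S\Lambda^{(a)}\tilde S^{-1}H$. $L$ is the Pascal matrix $L_{n,m}=\binom nm$ ($n\ge m$), $\Pi=SLS^{-1}$, $\Pi^{-1}=SL^{-1}S^{-1}$;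 $L^{(a)}$ has only nonzero entries $L^{(a)}_{2n+a-1,2m+a-1}=\binom nm$ ($n\ge m$), and $\Pi^{(a)}=H^{-1}\tilde SL^{(a)}\tilde S^{-1}H$. *)

From mathcomp Require Import all_boot all_order all_algebra.
From mathcomp Require Import all_classical all_reals all_analysis.
From mathcomp Require Import complex.
Set Implicit Arguments. Unset Strict Implicit. Unset Printing Implicit Defensive.
Import Order.TTheory GRing.Theory Num.Theory.
Import numFieldNormedType.Exports.
Local Open Scope ring_scope.

Definition cplx (R : realType) : numFieldType := R[i].

(* Semi-infinite matrices indexed by N_0 x N_0. *)
Definition imx (K : Type) := nat -> nat -> K.

Section InfMatrices.
Variable K : numFieldType.

(* Product of semi-infinite matrices: (AB)_{n,m} = sum_{k>=0} A_{n,k} B_{k,m}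
   (a series; all products occurring below have finitely many nonzero terms). *)
Definition imul (A B : imx K) : imx K :=
  fun n m => limn (series (fun k => A n k * B k m)).
Definition iadd (A B : imx K) : imx K := fun n m => A n m + B n m.
Definition iid : imx K := fun n m => (n == m)%:R.
Definition itr (A : imx K) : imx K := fun n m => A m n.
Definition idiag (d : nat -> K) : imx K := fun n m => if n == m then d n else 0.
Definition ipow (A : imx K) (j : nat) : imx K := iter j (imul A) iid.
Definition ipoly (p : {poly K}) (A : imx K) : imx K :=
  fun n m => \sum_(i < size p) p`_i * ipow A i n m.

Definition lower_tri (A : imx K) : Prop := forall n m, (n < m)%N -> A n m = 0.
Definition lower_unitri (A : imx K) : Prop := lower_tri A /\ forall n, A n n = 1.
Definition is_inv_lt (A B : imx K) : Prop :=
  lower_tri B /\ imul A B = iid /\ imul B A = iid.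

Definition Lam : imx K := fun n m => (m == n.+1)%:R.
Definition I1 : imx K := idiag (fun n => (~~ odd n)%:R).
Definition I2 : imx K := idiag (fun n => (odd n)%:R).
Definition Lam1 : imx K := imul (imul Lam Lam) I1.
Definition Lam2 : imx K := imul (imul Lam Lam) I2.

Definition pascal : imx K := fun n m => 'C(n, m)%:R.
Definition pascal1 : imx K :=
  fun n m => if ~~ odd n && ~~ odd m then 'C(n./2, m./2)%:R else 0.
Definition pascal2 : imx K :=
  fun n m => if odd n && odd m then 'C(n./2, m./2)%:R else 0.

Definition X1 (x : K) (m : nat) : K := if odd m then 0 else x ^+ m./2.
Definition X2 (x : K) (m : nat) : K := if odd m then x ^+ m./2 else 0.

Definition moment_term (w1 w2 : nat -> K) (n m k : nat) : K :=
  (k%:R) ^+ n * (w1 k * X1 k%:R m + w2 k * X2 k%:R m).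
(* moment matrix M = sum_k X(k) (w1(k) X^(1)(k) + w2(k) X^(2)(k))^T *)
Definition moment (w1 w2 : nat -> K) : imx K :=
  fun n m => limn (series (moment_term w1 w2 n m)).

Definition lead_block (A : imx K) (N : nat) : 'M[K]_N := \matrix_(i < N, j < N) A i j.

End InfMatrices.

From mathcomp Require Import all_boot all_order all_algebra.
From mathcomp Require Import all_classical all_reals all_analysis.
From mathcomp Require Import complex.
Import Order.TTheory GRing.Theory Num.Theory.
Import numFieldNormedType.Exports.
Local Open Scope ring_scope.
Local Open Scope classical_set_scope.

(* The moment matrix M is the sum of the rank-one matrices X(k) v(k)^T with
   v(k) = w1(k) X^(1)(k) + w2(k) X^(2)(k).  Since Lambda X(t) = t X(t),
   L X(t) = X(t+1), Lambda^(a) X^(a)(t) = t X^(a)(t), L^(a) X^(a)(t) = X^(a)(t+1),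
   and L^(a) kills the vectors supported on the indices of the other parity,
   the matrix Sigma = L^(1) sigma1(Lambda^(1)) + L^(2) sigma2(Lambda^(2))
   maps v(k) to sigma1(k) w1(k) X^(1)(k+1) + sigma2(k) w2(k) X^(2)(k+1), which is
   theta(k+1) v(k+1) by the Pearson equations.  Shifting the summation index and using
   theta(0) = 0 gives theta(Lambda) M = L M Sigma^T.  As S M = H St^{-T},
   conjugating this identity by S and by P = H^{-1} St turns it into
   Pi^{-1} theta(T) = (P Sigma P^{-1})^T, which is the claimed right-hand side.
   Every matrix involved except M has rows with finitely many nonzero
   entries; this is what makes the infinite products associative. *)

Section RowFinite.
Context {K : numFieldType}.
Implicit Types (A B C : imx K) (d : nat -> K).

Definition row_finite A := forall n, exists N, forall k, (N <= k)%N -> A n k = 0.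
Definition col_finite A := row_finite (itr A).

Lemma imul_truncE {A B n m} N :
  (forall k, (N <= k)%N -> A n k * B k m = 0) ->
  imul A B n m = \sum_(k < N) A n k * B k m.
Proof.
move=> AB0; apply: norm_lim_near_cst; exists N => // k /= Nk.
rewrite /series /= (@big_cat_nat _ _ _ N 0 k _ _ (leq0n N) Nk) /= big_mkord.
rewrite [X in _ + X](_ : _ = 0) ?addr0 // big_nat_cond.
by rewrite big1 // => i /andP[/andP[/AB0]].
Qed.

Lemma imul_rowE {A} B {n} m {N} : (forall k, (N <= k)%N -> A n k = 0) ->
  imul A B n m = \sum_(k < N) A n k * B k m.
Proof. by move=> A0; apply: imul_truncE => k /A0 ->; rewrite mul0r. Qed.

Lemma row_finite_uniform {A} : row_finite A -> forall N, exists N',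
  forall k j, (k < N)%N -> (N' <= j)%N -> A k j = 0.
Proof.
move=> rA; elim=> [|N [N' IH]]; first by exists 0%N.
have [M AM] := rA N; exists (maxn N' M) => k j.
rewrite ltnS leq_eqVlt => /orP[/eqP -> | kN] jb.
  by apply: AM; rewrite (leq_trans (leq_maxr _ _) jb).
by apply: IH; rewrite // (leq_trans (leq_maxl _ _) jb).
Qed.

Lemma imulA_trunc {A B C n m N} N' :
  (forall k, (N <= k)%N -> A n k = 0) ->
  (forall k j, (k < N)%N -> (N' <= j)%N -> B k j * C j m = 0) ->
  imul (imul A B) C n m = imul A (imul B C) n m.
Proof.
move=> A0 BC0; rewrite (imul_rowE _ _ A0) (imul_truncE N') => [|j Nj].
  transitivity (\sum_(j < N') \sum_(k < N) A n k * (B k j * C j m)).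
    apply: eq_bigr => j _; rewrite (imul_rowE _ _ A0) mulr_suml.
    by apply: eq_bigr => k _; rewrite mulrA.
  rewrite exchange_big; apply: eq_bigr => k _.
  by rewrite (imul_truncE N') ?mulr_sumr // => j; apply: BC0.
rewrite (imul_rowE _ _ A0) mulr_suml big1 // => k _.
by rewrite -mulrA BC0 ?mulr0.
Qed.

Lemma imulA {A B C} : row_finite A -> row_finite B ->
  imul (imul A B) C = imul A (imul B C).
Proof.
move=> rA rB; apply/funext => n; apply/funext => m.
have [N AN] := rA n; have [N' BN'] := row_finite_uniform rB N.
by apply: (imulA_trunc N' AN) => k j kN jN; rewrite BN' // mul0r.
Qed.

Lemma imulA_rc {A B C} : row_finite A -> col_finite C ->
  imul (imul A B) C = imul A (imul B C).
Proof.
move=> rA cC; apply/funext => n; apply/funext => m.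
have [N AN] := rA n; have [N' CN'] := cC m.
by apply: (imulA_trunc N' AN) => k j kN /CN' /= C0; rewrite [C j m]C0 mulr0.
Qed.

Lemma itrK A : itr (itr A) = A. Proof. by []. Qed.

Lemma itr_imul A B : itr (imul A B) = imul (itr B) (itr A).
Proof.
apply/funext => n; apply/funext => m; rewrite /itr /imul.
by congr (limn (series _)); apply/funext => k; rewrite mulrC.
Qed.

Lemma imulA_cc {A B C} : col_finite B -> col_finite C ->
  imul (imul A B) C = imul A (imul B C).
Proof.
move=> cB cC; rewrite -[LHS]itrK -[RHS]itrK; congr itr.
by rewrite !itr_imul imulA.
Qed.

Lemma row_finiteM {A B} : row_finite A -> row_finite B -> row_finite (imul A B).
Proof.
move=> rA rB n; have [N AN] := rA n; have [N' BN'] := row_finite_uniform rB N.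
exists N' => j Nj; rewrite (imul_rowE _ _ AN) big1 // => k _.
by rewrite BN' ?mulr0.
Qed.

Lemma lower_tri_row_finite {A} : lower_tri A -> row_finite A.
Proof. by move=> lA n; exists n.+1 => k; apply: lA. Qed.

Lemma row_finite_diag d : row_finite (idiag d).
Proof. by move=> n; exists n.+1 => k; rewrite /idiag; case: eqP => [->|]; rewrite ?ltnn. Qed.

Lemma row_finite_id : row_finite (iid K).
Proof. by move=> n; exists n.+1 => k; rewrite /iid; case: eqP => [->|]; rewrite ?ltnn. Qed.

Lemma imul_delta_l {A B n m} j c : (forall k, A n k = (k == j)%:R * c) ->
  imul A B n m = c * B j m.
Proof.
move=> Aj; rewrite (imul_rowE _ _ (N := j.+1)) => [|k]; last first.
  by rewrite Aj; case: eqP => [->|]; rewrite ?ltnn ?mul0r.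
rewrite big_ord_recr /= big1 ?add0r => [|k _]; first by rewrite Aj eqxx mul1r.
by rewrite Aj (ltn_eqF (ltn_ord k)) !mul0r.
Qed.

Lemma imul_delta_r {A B n m} j c : (forall k, B k m = (k == j)%:R * c) ->
  imul A B n m = A n j * c.
Proof.
move=> Bj; rewrite -[LHS]/(itr (imul A B) m n) itr_imul mulrC.
by apply: imul_delta_l => k; apply: Bj.
Qed.

Lemma imul1l A : imul (iid K) A = A.
Proof.
apply/funext => n; apply/funext => m; rewrite (imul_delta_l n 1) ?mul1r //.
by move=> k; rewrite /iid eq_sym mulr1.
Qed.

Lemma imul1r A : imul A (iid K) = A.
Proof.
apply/funext => n; apply/funext => m; rewrite (imul_delta_r m 1) ?mulr1 //.
by move=> k; rewrite /iid mulr1.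
Qed.

Lemma imul_diagl d A n m : imul (idiag d) A n m = d n * A n m.
Proof.
by apply: imul_delta_l => k; rewrite /idiag eq_sym; case: eqP; rewrite ?mul1r ?mul0r.
Qed.

Lemma imul_diagr d A n m : imul A (idiag d) n m = A n m * d m.
Proof.
by apply: imul_delta_r => k; rewrite /idiag; case: eqP => [->|]; rewrite ?mul1r ?mul0r.
Qed.

Lemma itr_diag d : itr (idiag d) = idiag d.
Proof. by apply/funext => n; apply/funext => m; rewrite /itr /idiag eq_sym; case: eqP => [->|]. Qed.

Lemma imulDl A B C : row_finite A -> row_finite B ->
  imul (iadd A B) C = iadd (imul A C) (imul B C).
Proof.
move=> rA rB; apply/funext => n; apply/funext => m.
have [N1 AN] := rA n; have [N2 BN] := rB n.
have AN' k : (maxn N1 N2 <= k)%N -> A n k = 0.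
  by move=> le; rewrite AN // (leq_trans (leq_maxl _ _) le).
have BN' k : (maxn N1 N2 <= k)%N -> B n k = 0.
  by move=> le; rewrite BN // (leq_trans (leq_maxr _ _) le).
rewrite /iadd (imul_rowE _ _ AN') (imul_rowE _ _ BN') -big_split.
rewrite (imul_rowE _ _ (N := maxn N1 N2)) => [|k le]; last by rewrite /iadd AN' ?BN' ?addr0.
by apply: eq_bigr => k _; rewrite mulrDl.
Qed.

Lemma imulDr A B C : row_finite A ->
  imul A (iadd B C) = iadd (imul A B) (imul A C).
Proof.
move=> rA; apply/funext => n; apply/funext => m; have [N AN] := rA n.
rewrite /iadd !(imul_rowE _ _ AN) -big_split.
by apply: eq_bigr => k _; rewrite mulrDr.
Qed.

Lemma row_finiteD A B : row_finite A -> row_finite B -> row_finite (iadd A B).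
Proof.
move=> rA rB n; have [N1 AN] := rA n; have [N2 BN] := rB n.
exists (maxn N1 N2) => k le; rewrite /iadd AN ?BN ?addr0 //.
  exact: leq_trans (leq_maxr _ _) le.
exact: leq_trans (leq_maxl _ _) le.
Qed.

Lemma itrD A B : itr (iadd A B) = iadd (itr A) (itr B).
Proof. by []. Qed.

Lemma imulZr A c B : row_finite A ->
  imul A (fun n m => c * B n m) = fun n m => c * imul A B n m.
Proof.
move=> rA; apply/funext => n; apply/funext => m; have [N AN] := rA n.
rewrite !(imul_rowE _ _ AN) mulr_sumr.
by apply: eq_bigr => k _; rewrite mulrCA.
Qed.

End RowFinite.

Section Polynomials.
Context {K : numFieldType}.
Implicit Types (A P Q : imx K) (p : {poly K}).

Lemma row_finite_ipow {A} j : row_finite A -> row_finite (ipow A j).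
Proof. by move=> rA; elim: j => [|j IH] /=; [exact: row_finite_id | exact: row_finiteM]. Qed.

Lemma ipowSr {A} j : row_finite A -> ipow A j.+1 = imul (ipow A j) A.
Proof.
move=> rA; elim: j => [|j IH]; first by rewrite /= imul1r imul1l.
rewrite -[ipow A j.+2]/(imul A (ipow A j.+1)) {1}IH.
by rewrite -(imulA rA (row_finite_ipow j rA)).
Qed.

Lemma itr_id : itr (iid K) = iid K.
Proof. by apply/funext => n; apply/funext => m; rewrite /itr /iid eq_sym. Qed.

Lemma ipow_itr A j : row_finite A -> ipow (itr A) j = itr (ipow A j).
Proof.
move=> rA; elim: j => [|j IH]; first by rewrite /= itr_id.
by rewrite (ipowSr j rA) itr_imul -IH.
Qed.

Lemma ipoly_itr p {A} : row_finite A -> ipoly p (itr A) = itr (ipoly p A).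
Proof.
move=> rA; apply/funext => n; apply/funext => m; rewrite /ipoly /itr.
by apply: eq_bigr => i _; rewrite ipow_itr.
Qed.

Lemma imul_sumr P d (c : nat -> K) (X : nat -> imx K) : row_finite P ->
  imul P (fun n m => \sum_(i < d) c i * X i n m) =
  fun n m => \sum_(i < d) c i * imul P (X i) n m.
Proof.
move=> rP; apply/funext => n; apply/funext => m; have [N PN] := rP n.
rewrite (imul_rowE _ _ PN).
under [RHS]eq_bigr do rewrite (imul_rowE _ _ PN) mulr_sumr.
rewrite exchange_big; apply: eq_bigr => k _; rewrite mulr_sumr.
by apply: eq_bigr => i _; rewrite mulrCA.
Qed.

Lemma imul_suml (X : nat -> imx K) Q d (c : nat -> K) :
  (forall i, row_finite (X i)) ->
  imul (fun n m => \sum_(i < d) c i * X i n m) Q =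
  fun n m => \sum_(i < d) c i * imul (X i) Q n m.
Proof.
move=> rX; apply/funext => n; apply/funext => m.
have [N XN] := row_finite_uniform (fun i => rX i n) d.
rewrite (imul_rowE _ _ (N := N)) => [|k Nk]; last by rewrite big1 // => i _; rewrite XN ?mulr0.
transitivity (\sum_(i < d) c i * \sum_(k < N) X i n k * Q k m); last first.
  by apply: eq_bigr => i _; rewrite (imul_rowE _ _ (N := N)) // => k; apply: XN.
under [RHS]eq_bigr do rewrite mulr_sumr.
rewrite exchange_big; apply: eq_bigr => k _; rewrite mulr_suml.
by apply: eq_bigr => i _; rewrite mulrA.
Qed.

Lemma row_finite_ipoly p {A} : row_finite A -> row_finite (ipoly p A).
Proof.
move=> rA n; have [N AN] := row_finite_uniform (fun i => row_finite_ipow i rA n) (size p).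
by exists N => k Nk; rewrite /ipoly big1 // => i _; rewrite AN ?mulr0.
Qed.

End Polynomials.

Section Similarity.
Context {K : numFieldType}.
Implicit Types (A B P Q S Si W Z : imx K) (p : {poly K}).

Definition inverse_pair P Q :=
  [/\ row_finite P, row_finite Q, imul P Q = iid K & imul Q P = iid K].

Definition iconj P Q A := imul (imul P A) Q.

Lemma inverse_pair_lower {S Si} : lower_tri S -> is_inv_lt S Si -> inverse_pair S Si.
Proof.
by move=> lS [lSi [SSi SiS]]; split=> //; apply: lower_tri_row_finite.
Qed.

Lemma inverse_pair_diag {d} : (forall n, d n != 0) ->
  inverse_pair (idiag (fun n => (d n)^-1)) (idiag d).
Proof.
move=> d_neq0; split; try exact: row_finite_diag;
  apply/funext => n; apply/funext => m; rewrite imul_diagl /idiag /iid;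
  by case: eqP => [->|]; rewrite ?mulr0 // ?mulVf ?mulfV.
Qed.

Lemma inverse_pairM {P Q P' Q'} : inverse_pair P Q -> inverse_pair P' Q' ->
  inverse_pair (imul P P') (imul Q' Q).
Proof.
move=> [rP rQ PQ QP] [rP' rQ' PQ' QP']; split; try exact: row_finiteM.
  by rewrite (imulA rP rP') -(imulA rP' rQ') PQ' imul1l.
by rewrite (imulA rQ' rQ) -(imulA rQ rP) QP imul1l.
Qed.

Lemma imulA_iconj {P A B C} : row_finite P -> row_finite A -> row_finite B ->
  imul (imul (imul P A) B) C = iconj P (imul B C) A.
Proof. by move=> rP rA rB; apply: imulA rB; apply: row_finiteM. Qed.

(* Here M = Si Q^T satisfies S M = Q^T, so W M = M Z^T gives
   (S W Si) Q^T = Q^T Z^T; now multiply by P^T, the inverse of Q^T. *)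
Lemma iconj_intertwine {S Si P Q W Z} :
  inverse_pair S Si -> inverse_pair P Q -> row_finite W -> row_finite Z ->
  imul W (imul Si (itr Q)) = imul (imul Si (itr Q)) (itr Z) ->
  iconj S Si W = itr (iconj P Q Z).
Proof.
move=> [rS rSi SSi _] [rP rQ PQ _] rW rZ WM.
have rX : row_finite (iconj S Si W) by apply: row_finiteM rSi; apply: row_finiteM.
have XQ : imul (iconj S Si W) (itr Q) = imul (itr Q) (itr Z).
  rewrite /iconj (imulA (row_finiteM rS rW) rSi) (imulA rS rW) WM.
  by rewrite -(imulA_rc rS (rZ : col_finite (itr Z))) -(imulA rS rSi) SSi imul1l.
rewrite -[LHS]imul1r -itr_id -PQ itr_imul -(imulA_rc rX (rP : col_finite (itr P))) XQ.
by rewrite /iconj !itr_imul (imulA_cc rZ rP).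
Qed.

Context {P Q : imx K} (PQ : inverse_pair P Q).

Lemma row_finite_iconj A : row_finite A -> row_finite (iconj P Q A).
Proof. by case: PQ => rP rQ _ _ rA; apply: row_finiteM => //; apply: row_finiteM. Qed.

Lemma iconjM A B : row_finite A -> row_finite B ->
  imul (iconj P Q A) (iconj P Q B) = iconj P Q (imul A B).
Proof.
case: PQ => rP rQ _ QP rA rB; have rPA := row_finiteM rP rA.
rewrite /iconj (imulA rPA rQ) -(imulA rQ (row_finiteM rP rB)) -(imulA rQ rP).
by rewrite QP imul1l -(imulA rPA rB) (imulA rP rA).
Qed.

Lemma ipow_iconj A j : row_finite A -> ipow (iconj P Q A) j = iconj P Q (ipow A j).
Proof.
case: PQ => _ _ PQ1 _ rA; elim: j => [|j IH]; first by rewrite /= /iconj imul1r PQ1.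
rewrite -[LHS]/(imul (iconj P Q A) (ipow (iconj P Q A) j)) IH iconjM //.
exact: row_finite_ipow.
Qed.

Lemma ipoly_iconj p A : row_finite A -> ipoly p (iconj P Q A) = iconj P Q (ipoly p A).
Proof.
case: PQ => rP rQ _ _ rA; rewrite /iconj /ipoly imul_sumr //.
rewrite (@imul_suml _ (fun i => imul P (ipow A i))).
  by apply/funext => n; apply/funext => m; apply: eq_bigr => i _; rewrite ipow_iconj.
by move=> i; apply: row_finiteM rP (row_finite_ipow i rA).
Qed.

Lemma iconjD A B : row_finite A -> row_finite B ->
  iadd (iconj P Q A) (iconj P Q B) = iconj P Q (iadd A B).
Proof.
case: PQ => rP _ _ _ rA rB.
by rewrite /iconj imulDr // imulDl //; apply: row_finiteM.
Qed.

Lemma imul_iconj_ipoly B p A : row_finite B -> row_finite A ->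
  imul (iconj P Q B) (ipoly p (iconj P Q A)) = iconj P Q (imul B (ipoly p A)).
Proof. by move=> rB rA; rewrite ipoly_iconj // iconjM //; apply: row_finite_ipoly. Qed.

End Similarity.

Section Eigenvectors.
Context {K : numFieldType}.
Implicit Types (A : imx K) (x : nat -> K).

Definition icol x : imx K := fun n _ => x n.

Lemma ipow_eigen {A x t} i : row_finite A ->
  imul A (icol x) = icol (fun n => t * x n) ->
  imul (ipow A i) (icol x) = icol (fun n => t ^+ i * x n).
Proof.
move=> rA Ax; elim: i => [|i IH].
  by rewrite imul1l; apply/funext => n; apply/funext => m; rewrite /icol mul1r.
rewrite -[ipow A i.+1]/(imul A (ipow A i)) (imulA rA (row_finite_ipow i rA)) IH.
rewrite -[icol _]/(fun n m => t ^+ i * icol x n m) imulZr // Ax.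
by apply/funext => n; apply/funext => m; rewrite /icol exprSr mulrA.
Qed.

Lemma ipoly_eigen {A x t} p : row_finite A ->
  imul A (icol x) = icol (fun n => t * x n) ->
  imul (ipoly p A) (icol x) = icol (fun n => p.[t] * x n).
Proof.
move=> rA Ax; rewrite /ipoly imul_suml => [|i]; last exact: row_finite_ipow.
apply/funext => n; apply/funext => m; rewrite [RHS]/icol horner_coef mulr_suml.
by apply: eq_bigr => i _; rewrite (ipow_eigen i rA Ax) /icol mulrA.
Qed.

End Eigenvectors.

Section ShiftPascal.
Context {K : numFieldType}.
Implicit Types (A Y : imx K) (p : {poly K}) (t : K) (b : bool).

Definition monomials t (n : nat) : K := t ^+ n.

Lemma row_finite_Lam : row_finite (Lam K).
Proof. by move=> n; exists n.+2 => k; rewrite /Lam; case: eqP => [->|]; rewrite ?ltnn. Qed.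

Lemma Lam_monomials t :
  imul (Lam K) (icol (monomials t)) = icol (fun n => t * monomials t n).
Proof.
apply/funext => n; apply/funext => m.
rewrite (imul_delta_l n.+1 1) => [|k]; last by rewrite /Lam mulr1.
by rewrite mul1r /icol /monomials exprS.
Qed.

Lemma pascal_lower : lower_tri (pascal K).
Proof. by move=> n m nm; rewrite /pascal bin_small. Qed.

Lemma pascal_monomials t :
  imul (pascal K) (icol (monomials t)) = icol (monomials (t + 1)).
Proof.
apply/funext => n; apply/funext => m.
rewrite (imul_rowE _ _ (N := n.+1)) => [|k nk]; last by rewrite /pascal bin_small.
by rewrite /icol /monomials exprD1n; apply: eq_bigr => k _; rewrite /pascal mulr_natl.
Qed.

Definition parity_monomials b t (n : nat) : K := if odd n == b then t ^+ n./2 else 0.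
Definition parity_shift b : imx K := fun n k => (k == n.+2)%:R * (odd k == b)%:R.
Definition parity_pascal b : imx K :=
  fun n m => if (odd n == b) && (odd m == b) then 'C(n./2, m./2)%:R else 0.
Definition parity_rows b Y := forall n m, odd n != b -> Y n m = 0.

Lemma X1E : @X1 K = parity_monomials false.
Proof. by apply/funext => t; apply/funext => m; rewrite /X1 /parity_monomials; case: odd. Qed.

Lemma X2E : @X2 K = parity_monomials true.
Proof. by apply/funext => t; apply/funext => m; rewrite /X2 /parity_monomials; case: odd. Qed.

Lemma imul_parity_shift b A n m :
  imul (parity_shift b) A n m = (odd n == b)%:R * A n.+2 m.
Proof.
rewrite (imul_delta_l n.+2 (odd n == b)%:R) // => k.
by rewrite /parity_shift; case: eqP => [->|]; rewrite ?mul0r //= negbK.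
Qed.

Lemma Lam1E : Lam1 K = parity_shift false.
Proof.
apply/funext => n; apply/funext => k.
rewrite /Lam1 /I1 imul_diagr (imul_delta_l n.+1 1) => [|j]; last by rewrite /Lam mulr1.
by rewrite mul1r /Lam /parity_shift; case: odd.
Qed.

Lemma Lam2E : Lam2 K = parity_shift true.
Proof.
apply/funext => n; apply/funext => k.
rewrite /Lam2 /I2 imul_diagr (imul_delta_l n.+1 1) => [|j]; last by rewrite /Lam mulr1.
by rewrite mul1r /Lam /parity_shift; case: odd.
Qed.

Lemma pascal1E : pascal1 K = parity_pascal false.
Proof.
by apply/funext => n; apply/funext => m; rewrite /pascal1 /parity_pascal; do 2!case: odd.
Qed.

Lemma pascal2E : pascal2 K = parity_pascal true.
Proof.
by apply/funext => n; apply/funext => m; rewrite /pascal2 /parity_pascal; do 2!case: odd.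
Qed.

Lemma row_finite_parity_shift b : row_finite (parity_shift b).
Proof.
move=> n; exists n.+3 => k; rewrite /parity_shift.
by case: eqP => [->|]; rewrite ?ltnn ?mul0r.
Qed.

Lemma parity_shift_monomials b t : imul (parity_shift b) (icol (parity_monomials b t)) =
  icol (fun n => t * parity_monomials b t n).
Proof.
apply/funext => n; apply/funext => m.
rewrite imul_parity_shift /icol /parity_monomials /= negbK.
by case: eqP; rewrite ?mul1r ?mul0r ?mulr0 // exprS.
Qed.

Lemma parity_rows_ipoly b c p Y : parity_rows c Y ->
  parity_rows c (imul (ipoly p (parity_shift b)) Y).
Proof.
move=> Yc; have rL := row_finite_parity_shift b.
have Lc i : parity_rows c (imul (ipow (parity_shift b) i) Y).
  elim: i => [|i IH]; first by rewrite imul1l.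
  move=> n m nc; rewrite -[ipow _ i.+1]/(imul (parity_shift b) (ipow (parity_shift b) i)).
  by rewrite (imulA rL (row_finite_ipow i rL)) imul_parity_shift IH ?mulr0 //= negbK.
rewrite /ipoly imul_suml => [n m nc|i]; last exact: row_finite_ipow.
by rewrite big1 // => i _; rewrite Lc ?mulr0.
Qed.

Lemma parity_pascal_lower b : lower_tri (parity_pascal b).
Proof.
move=> n m nm; rewrite /parity_pascal; case: ifP => // /andP[/eqP nb /eqP mb].
rewrite bin_small //; move: nm; rewrite leq_eqVlt => /orP[/eqP mE | /half_leq //].
by move: mb; rewrite -mE /= nb; case: (b).
Qed.

Lemma parity_pascal_rows {b Y} : parity_rows (~~ b) Y ->
  imul (parity_pascal b) Y = fun _ _ => 0.
Proof.
move=> Yb; apply/funext => n; apply/funext => m.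
rewrite (imul_truncE 0) ?big_ord0 // => k _; rewrite /parity_pascal.
have [kb|_] := eqVneq (odd k) b; last by rewrite andbF mul0r.
by rewrite Yb ?mulr0 // kb; case: (b).
Qed.

Lemma sum_ord_double (f : nat -> K) N :
  \sum_(k < N.*2) f k = \sum_(i < N) (f i.*2 + f i.*2.+1).
Proof.
elim: N => [|N IH]; first by rewrite !big_ord0.
by rewrite doubleS !big_ord_recr /= IH addrA.
Qed.

Lemma parity_pascal_monomials b t :
  imul (parity_pascal b) (icol (parity_monomials b t)) =
  icol (parity_monomials b (t + 1)).
Proof.
apply/funext => n; apply/funext => m; rewrite [RHS]/icol {2}/parity_monomials.
have [nb|nb] := eqVneq (odd n) b; last first.
  rewrite (imul_truncE 0) ?big_ord0 // => k _.
  by rewrite /parity_pascal (negbTE nb) mul0r.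
rewrite (imul_rowE _ _ (N := (n./2).+1.*2)) => [|k nk]; last first.
  rewrite /parity_pascal nb eqxx /=; case: ifP => // _; rewrite bin_small //.
  by move: (half_leq nk); rewrite doubleK.
rewrite (sum_ord_double (fun k => parity_pascal b n k * icol (parity_monomials b t) k m)).
rewrite exprD1n; apply: eq_bigr => i _.
rewrite /parity_pascal /icol /parity_monomials nb eqxx /= odd_double /= uphalf_double doubleK.
by case: (b); rewrite /= ?mul0r ?add0r ?addr0 mulr_natl.
Qed.

End ShiftPascal.

Section PearsonMatrix.
Context {K : numFieldType}.
Implicit Types (p : {poly K}) (b : bool).

Lemma parity_block b p s c d (v : nat -> K) :
  (forall n, v n = c * parity_monomials b s n + d * parity_monomials (~~ b) s n) ->
  imul (imul (parity_pascal b) (ipoly p (parity_shift b))) (icol v) =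
  icol (fun n => c * (p.[s] * parity_monomials b (s + 1) n)).
Proof.
move=> vE; have rL := @row_finite_parity_shift K b.
have rP := lower_tri_row_finite (@parity_pascal_lower K b).
have rE : row_finite (ipoly p (parity_shift b)) by apply: row_finite_ipoly.
have Eb : imul (ipoly p (parity_shift b)) (icol (parity_monomials b s)) =
    fun n m => p.[s] * icol (parity_monomials b s) n m.
  exact: ipoly_eigen p rL (parity_shift_monomials b s).
have Enb : parity_rows (~~ b)
    (imul (ipoly p (parity_shift b)) (icol (parity_monomials (~~ b) s))).
  by apply: parity_rows_ipoly => n m; rewrite /icol /parity_monomials => /negbTE ->.
have -> : icol v = iadd (fun n m => c * icol (parity_monomials b s) n m)
                        (fun n m => d * icol (parity_monomials (~~ b) s) n m).
  by apply/funext => n; apply/funext => m; rewrite /iadd /icol vE.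
rewrite (imulA rP rE) imulDr // !imulZr // Eb imulDr // !imulZr //.
rewrite (parity_pascal_rows Enb) parity_pascal_monomials.
by apply/funext => n; apply/funext => m; rewrite /iadd /icol mulr0 addr0.
Qed.

Lemma row_finite_pearson_factors :
  [/\ row_finite (Lam1 K), row_finite (Lam2 K), row_finite (pascal1 K)
     & row_finite (pascal2 K)].
Proof.
rewrite Lam1E Lam2E pascal1E pascal2E; split; try exact: row_finite_parity_shift.
all: exact/lower_tri_row_finite/parity_pascal_lower.
Qed.

Definition pearson_mx (sigma1 sigma2 : {poly K}) : imx K :=
  iadd (imul (pascal1 K) (ipoly sigma1 (Lam1 K)))
       (imul (pascal2 K) (ipoly sigma2 (Lam2 K))).

Lemma row_finite_parity_block b p :
  row_finite (imul (parity_pascal b) (ipoly p (parity_shift b))).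
Proof.
apply: row_finiteM; first exact/lower_tri_row_finite/parity_pascal_lower.
exact/row_finite_ipoly/row_finite_parity_shift.
Qed.

Lemma row_finite_pearson_mx sigma1 sigma2 : row_finite (pearson_mx sigma1 sigma2).
Proof.
rewrite /pearson_mx Lam1E Lam2E pascal1E pascal2E.
by apply: row_finiteD; apply: row_finite_parity_block.
Qed.

Lemma pearson_mx_moment_vec sigma1 sigma2 s c1 c2 :
  imul (pearson_mx sigma1 sigma2) (icol (fun k => c1 * X1 s k + c2 * X2 s k)) =
  icol (fun n => c1 * (sigma1.[s] * X1 (s + 1) n) + c2 * (sigma2.[s] * X2 (s + 1) n)).
Proof.
rewrite /pearson_mx Lam1E Lam2E pascal1E pascal2E X1E X2E.
rewrite imulDl; try exact: row_finite_parity_block.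
rewrite (parity_block _ _ s c1 c2) // (parity_block _ _ s c2 c1) => [|n].
  by apply/funext => n; apply/funext => m.
by rewrite addrC.
Qed.

Lemma tr_iconj_pearson_mx {P Q : imx K} (PQ : inverse_pair P Q) sigma1 sigma2 :
  iadd (imul (ipoly sigma1 (itr (iconj P Q (Lam1 K)))) (itr (iconj P Q (pascal1 K))))
       (imul (ipoly sigma2 (itr (iconj P Q (Lam2 K)))) (itr (iconj P Q (pascal2 K)))) =
  itr (iconj P Q (pearson_mx sigma1 sigma2)).
Proof.
have [rL1 rL2 rP1 rP2] := row_finite_pearson_factors.
have rc := row_finite_iconj PQ.
rewrite (ipoly_itr _ (rc _ rL1)) (ipoly_itr _ (rc _ rL2)).
rewrite -[X in iadd X _](itr_imul (iconj P Q (pascal1 K))).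
rewrite -[X in iadd _ X](itr_imul (iconj P Q (pascal2 K))) -itrD.
rewrite (imul_iconj_ipoly PQ _ _ _ rP1 rL1) (imul_iconj_ipoly PQ _ _ _ rP2 rL2).
by rewrite iconjD //; apply: row_finiteM (row_finite_ipoly _ _).
Qed.

End PearsonMatrix.

Section OuterSeries.
Context {K : numFieldType}.
Implicit Types (A B F : imx K) (x y z : nat -> nat -> K).

Definition outer_series x y F :=
  forall j m, series (fun t => x t j * y t m) @ \oo --> F j m.

Lemma outer_series_imull {A x y F} z : row_finite A ->
  (forall t, imul A (icol (x t)) = icol (z t)) ->
  outer_series x y F -> outer_series z y (imul A F).
Proof.
move=> rA Axz xyF n m; have [N AN] := rA n; rewrite (imul_rowE _ _ AN).
have -> : series (fun t => z t n * y t m) =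
    (fun T => \sum_(k < N) A n k * series (fun t => x t k * y t m) T).
  apply/funext => T; rewrite /series /=.
  under eq_bigr => t _ do
    rewrite -[z t n]/(icol (z t) n 0) -Axz (imul_rowE _ _ AN) mulr_suml.
  rewrite exchange_big; apply: eq_bigr => k _; rewrite mulr_sumr.
  by apply: eq_bigr => t _; rewrite mulrA.
by apply: cvg_big => [|k _]; [exact: add_continuous | exact: cvgMl_tmp].
Qed.

Lemma outer_series_itr {x y F} : outer_series x y F -> outer_series y x (itr F).
Proof.
move=> xyF j m; rewrite (_ : (fun t => _) = fun t => x t m * y t j) ?xyF //.
by apply/funext => t; rewrite mulrC.
Qed.

Lemma outer_series_imulr {B x y F} z : row_finite B ->
  (forall t, imul B (icol (y t)) = icol (z t)) ->
  outer_series x y F -> outer_series x z (imul F (itr B)).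
Proof.
move=> rB Byz /outer_series_itr /(outer_series_imull z rB Byz) /outer_series_itr.
by rewrite itr_imul.
Qed.

Lemma cvg_series_shift {u v : nat -> K} {a b : K} :
  u 0 = 0 -> (forall t, v t = u t.+1) ->
  series u @ \oo --> a -> series v @ \oo --> b -> a = b.
Proof.
move=> u0 vu ua; have -> : series v = fun T => series u T.+1.
  apply/funext => T; rewrite /series /= big_nat_recl // u0 add0r.
  by apply: eq_bigr => t _; rewrite vu.
by rewrite cvg_shiftS => ub; rewrite -(norm_cvg_lim ua) (norm_cvg_lim ub).
Qed.

End OuterSeries.

Section PearsonShift.
Context {K : numFieldType}.
Context {w1 w2 : nat -> K} {theta sigma1 sigma2 : {poly K}}.
Hypotheses (cvg_moment : forall n m, cvgn (series (moment_term w1 w2 n m)))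
  (pearson1 : forall k, theta.[k.+1%:R] * w1 k.+1 = sigma1.[k%:R] * w1 k)
  (pearson2 : forall k, theta.[k.+1%:R] * w2 k.+1 = sigma2.[k%:R] * w2 k)
  (theta0 : theta.[0] = 0).

Let vec t m : K := w1 t * X1 t%:R m + w2 t * X2 t%:R m.

Lemma moment_outer_series :
  outer_series (fun t => monomials (t%:R : K)) vec (moment w1 w2).
Proof. by move=> j m; apply: cvg_moment. Qed.

Lemma pearson_shift :
  imul (ipoly theta (Lam K)) (moment w1 w2) =
  imul (pascal K) (imul (moment w1 w2) (itr (pearson_mx sigma1 sigma2))).
Proof.
apply/funext => n; apply/funext => m.
have lhs_cvg := outer_series_imull _ (row_finite_ipoly theta row_finite_Lam)
  (fun t => ipoly_eigen theta row_finite_Lam (Lam_monomials _)) moment_outer_series n m.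
have shift_pascal t : imul (pascal K) (icol (monomials t%:R)) = icol (monomials t.+1%:R).
  by rewrite pascal_monomials natr1.
have shift_pearson t : imul (pearson_mx sigma1 sigma2) (icol (vec t)) =
    icol (fun m => theta.[t.+1%:R] * vec t.+1 m).
  rewrite pearson_mx_moment_vec natr1; apply/funext => j; apply/funext => k.
  by rewrite /icol /vec mulrDr !mulrA pearson1 pearson2 ![w1 t * _]mulrC ![w2 t * _]mulrC.
have rhs_cvg := outer_series_imull _ (lower_tri_row_finite pascal_lower) shift_pascal
  (outer_series_imulr _ (row_finite_pearson_mx _ _) shift_pearson moment_outer_series) n m.
apply: (cvg_series_shift _ _ lhs_cvg rhs_cvg) => [|t]; first by rewrite theta0 !mul0r.
by rewrite /monomials mulrCA mulrA.
Qed.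

End PearsonShift.

Section ComplexSeries.
Context {R : realType}.
Implicit Types (z : cplx R) (u : nat -> cplx R).
Local Notation Re := (@complex.Re R).
Local Notation Im := (@complex.Im R).

Definition modulus z : R := Num.sqrt (Re z ^+ 2 + Im z ^+ 2).

Lemma Re_le_modulus z : `|Re z| <= modulus z.
Proof. by rewrite /modulus -sqrtr_sqr ler_wsqrtr // lerDl sqr_ge0. Qed.

Lemma Im_le_modulus z : `|Im z| <= modulus z.
Proof. by rewrite /modulus -sqrtr_sqr ler_wsqrtr // lerDr sqr_ge0. Qed.

Lemma modulus_le z : modulus z <= `|Re z| + `|Im z|.
Proof.
rewrite /modulus -[X in _ <= X]ger0_norm ?addr_ge0 // -sqrtr_sqr ler_wsqrtr //.
by rewrite sqrrD !real_normK ?num_real // addrAC lerDl mulrn_wge0 ?mulr_ge0.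
Qed.

Lemma cvg_component {f : {additive cplx R -> R}} {u l} :
  (forall z, `|f z| <= modulus z) ->
  u n @[n --> \oo] --> l -> f (u n) @[n --> \oo] --> f l.
Proof.
move=> f_le /cvgrPdist_lt ul; apply/cvgrPdist_lt => e e0.
have e0' : 0 < (e%:C%C : cplx R) by rewrite ltcR.
apply: filterS (ul _ e0') => n; rewrite normc_def ltcR -(raddfB f).
exact: le_lt_trans (f_le _).
Qed.

Lemma cvg_ReIm u a b :
  Re (u n) @[n --> \oo] --> a -> Im (u n) @[n --> \oo] --> b ->
  u n @[n --> \oo] --> ((a +i* b)%C : cplx R).
Proof.
move=> /cvgrPdist_lt Ra /cvgrPdist_lt Ib; apply/cvgrPdist_lt => e.
case: e => [e e'] /[dup]; rewrite {1}ltcE /= => /andP[/eqP -> e0] _.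
have e20 : 0 < e / 2 by rewrite divr_gt0.
apply: filterS2 (Ra _ e20) (Ib _ e20) => n Rn In.
rewrite normc_def ltcR (le_lt_trans (modulus_le _)) // [e]splitr.
by rewrite !raddfB /=; exact: ltrD.
Qed.

Lemma normed_series_cvg {u} :
  cvgn (series (fun k => `|u k|)) -> cvgn (series u).
Proof.
move=> abs_cvg.
have series_Re v : (fun n => Re (series v n)) = series (fun k => Re (v k)).
  by apply/funext => n; rewrite /series /= raddf_sum.
have series_Im v : (fun n => Im (series v n)) = series (fun k => Im (v k)).
  by apply/funext => n; rewrite /series /= raddf_sum.
have modulus_cvg : cvgn (series (fun k => modulus (u k))).
  have := cvg_component Re_le_modulus abs_cvg; rewrite series_Re => /cvgP.
  by under eq_fun do rewrite normc_def.
have comp_cvg (f : cplx R -> R) : (forall z, `|f z| <= modulus z) ->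
    cvgn (series (fun k => f (u k))).
  move=> f_le; apply: normed_cvg; apply: series_le_cvg modulus_cvg => k.
  - exact: normr_ge0.
  - exact: sqrtr_ge0.
  - exact: f_le.
apply: cvgP; apply: cvg_ReIm.
  by rewrite series_Re; apply: comp_cvg Re_le_modulus.
by rewrite series_Im; apply: comp_cvg Im_le_modulus.
Qed.

End ComplexSeries.

Section GaussBorel.
Context {K : numFieldType}.
Implicit Types (S Si St Sti : imx K) (h : nat -> K).

Lemma inv_lower_unitri_diag {S Si} : lower_unitri S -> is_inv_lt S Si ->
  forall n, Si n n = 1.
Proof.
move=> [lS S1] [lSi [SSi _]] n; have := congr1 (fun M => M n n) SSi.
rewrite /= /iid eqxx (imul_rowE _ _ (N := n.+1)) => [|k nk]; last by rewrite lS.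
rewrite big_ord_recr /= big1 ?add0r ?S1 ?mul1r // => k _.
by rewrite lSi ?mulr0.
Qed.

Lemma lead_block_gauss_borel Si Sti h N : lower_tri Si ->
  lead_block (imul (imul Si (idiag h)) (itr Sti)) N =
  lead_block Si N *m diag_mx (\row_(i < N) h i) *m (lead_block Sti N)^T.
Proof.
move=> lSi; apply/matrixP => i j; rewrite mul_mx_diag !mxE.
rewrite (imul_rowE _ _ (N := N)) => [|k Nk].
  by apply: eq_bigr => k _; rewrite imul_diagr !mxE.
by rewrite imul_diagr lSi ?mul0r // (leq_trans (ltn_ord i)).
Qed.

Lemma gauss_borel_diag_neq0 {S St Si Sti h} :
  lower_unitri S -> lower_unitri St -> is_inv_lt S Si -> is_inv_lt St Sti ->
  (forall N, \det (lead_block (imul (imul Si (idiag h)) (itr Sti)) N) != 0) ->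
  forall n, h n != 0.
Proof.
move=> uS uSt iS iSt det_neq0 n; have := det_neq0 n.+1.
have [lSi _] := iS.
have unit_diag_det (A B : imx K) :
    lower_unitri A -> is_inv_lt A B -> \det (lead_block B n.+1) = 1.
  move=> uA iAB; have [lB _] := iAB.
  rewrite det_trig; last by apply/is_trig_mxP => i j ij; rewrite mxE lB.
  by rewrite big1 // => i _; rewrite mxE (inv_lower_unitri_diag uA iAB).
rewrite lead_block_gauss_borel // !det_mulmx det_tr det_diag.
rewrite (unit_diag_det S) // (unit_diag_det St) // mul1r mulr1.
by rewrite big_ord_recr /= mxE mulf_eq0 negb_or => /andP[].
Qed.

End GaussBorel.

Theorem mainTheorem6 (R : realType) (w1 w2 : nat -> cplx R)
  (theta sigma1 sigma2 : {poly cplx R})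
  (S St Si Sti : imx (cplx R)) (h : nat -> cplx R) (Linv : imx (cplx R)) :
  (* absolute convergence of the series defining the moments *)
  (forall n m, cvgn (series (fun k => `|moment_term w1 w2 n m k|))) ->
  (* all leading principal minors of the moment matrix are nonzero *)
  (forall N, \det (lead_block (moment w1 w2) N) != 0) ->
  (* Gauss-Borel factorization M = S^{-1} H St^{-T} *)
  lower_unitri S -> lower_unitri St ->
  is_inv_lt S Si -> is_inv_lt St Sti ->
  moment w1 w2 = imul (imul Si (idiag h)) (itr Sti) ->
  (* L^{-1} is the inverse of the Pascal matrix *)
  is_inv_lt (pascal _) Linv ->
  (* discrete Pearson equations *)
  (forall k, theta.[(k.+1)%:R] * w1 k.+1 = sigma1.[k%:R] * w1 k) ->
  (forall k, theta.[(k.+1)%:R] * w2 k.+1 = sigma2.[k%:R] * w2 k) ->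
  theta.[0] = 0 ->
  let H := idiag h in
  let Hinv := idiag (fun n => (h n)^-1) in
  let T := imul (imul S (Lam _)) Si in
  let T1 := imul (imul (imul (imul Hinv St) (Lam1 _)) Sti) H in
  let T2 := imul (imul (imul (imul Hinv St) (Lam2 _)) Sti) H in
  let Piinv := imul (imul S Linv) Si in
  let Pi1 := imul (imul (imul (imul Hinv St) (pascal1 _)) Sti) H in
  let Pi2 := imul (imul (imul (imul Hinv St) (pascal2 _)) Sti) H in
  imul Piinv (ipoly theta T) =
  iadd (imul (ipoly sigma1 (itr T1)) (itr Pi1))
       (imul (ipoly sigma2 (itr T2)) (itr Pi2)).
Proof.
move=> abs_cvg det_neq0 uS uSt iS iSt M_GB [lLinv [LLinv LinvL]] pearson1 pearson2 theta0.
move=> H Hinv T T1 T2 Piinv Pi1 Pi2.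
have h_neq0 : forall n, h n != 0.
  by apply: (gauss_borel_diag_neq0 uS uSt iS iSt); rewrite -M_GB.
have SSi := inverse_pair_lower (proj1 uS) iS; have [_ rSi _ _] := SSi.
have StSti := inverse_pair_lower (proj1 uSt) iSt; have [_ rSti _ _] := StSti.
pose P := imul Hinv St; pose Q := imul Sti H.
have PQ : inverse_pair P Q := inverse_pairM (inverse_pair_diag h_neq0) StSti.
have [rP _ _ _] := PQ; have [rL1 rL2 rP1 rP2] := @row_finite_pearson_factors (cplx R).
have [-> -> -> ->] : [/\ T1 = iconj P Q (Lam1 _), T2 = iconj P Q (Lam2 _),
    Pi1 = iconj P Q (pascal1 _) & Pi2 = iconj P Q (pascal2 _)].
  by split; apply: imulA_iconj rP _ rSti.
have rLinv := lower_tri_row_finite lLinv.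
have rW := row_finiteM rLinv (row_finite_ipoly theta (@row_finite_Lam (cplx R))).
rewrite (tr_iconj_pearson_mx PQ) -[Piinv]/(iconj S Si Linv) -[T]/(iconj S Si (Lam _)).
rewrite (imul_iconj_ipoly SSi _ _ _ rLinv row_finite_Lam).
apply: (iconj_intertwine SSi PQ rW (row_finite_pearson_mx _ _)).
have -> : imul Si (itr Q) = moment w1 w2.
  by rewrite M_GB /Q itr_imul itr_diag -(imulA rSi (row_finite_diag h)).
have cvg_moment n m := normed_series_cvg (abs_cvg n m).
rewrite (imulA rLinv (row_finite_ipoly _ row_finite_Lam)).
rewrite (pearson_shift cvg_moment pearson1 pearson2 theta0).
by rewrite -(imulA rLinv (lower_tri_row_finite pascal_lower)) LinvL imul1l.
Qed.
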